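(* There is a family of instances of problem MR, one for each number of jobs $n$, for which $\frac{OPT_{\mathrm{FCFS}}}{OPT}=\Omega(n)$, where $OPT$ is the optimal objective value of MR and $OPT_{\mathrm{FCFS}}$ is the optimal objective value of MR restricted to the FCFS order.
   Context: Problem MR. There are jobs $\mathcal J=\{1,\dots,n\}$ and processors $\mathcal P=\{1,\dots,m\}$. Job $j$ has weight $w_j>0$, release date $r_j\ge0$, and a nonempty set of Map tasks and a nonempty set of Reduce tasks, preassigned to processors with at most one task of each job per processor; $T_{i,j}$ is the task of job $j$ on processor $i$, with work $v_{i,j}\ge0$. A schedule gives each task a start time and a constant speed $s_{i,j}>0$; the task runs non-preemptively for $v_{i,j}/s_{i,j}$ time units and uses energy $v_{i,j}s_{i,j}^{\beta-1}$, where $\beta>1$ is a fixed constant. Feasibility: each processor runs at most one task at a time; tasks of job $j$ start no earlier than $r_j$; Reduce tasks of job $j$ start only after all Map tasks of job $j$ complete; total energy at most a given budget $E>0$. $C_j$ is the maximum completion time of the tasks of job $j$; the objective is to minimize $\sum_j w_jC_j$. Given an order $\sigma$ of the jobs, MR restricted to $\sigma$ is MR with the additional requirement that on every processor the tasks are executed in the order $\sigma$ of their jobs (the same order for all processors). The FCFS order is any order $\sigma$ such that $r_j<r_{j'}$ implies $j$ precedes $j'$. *)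

From Stdlib Require Import Reals.
From Coquelicot Require Import Coquelicot.
Open Scope R_scope.

Inductive task_kind := MapTask | ReduceTask.

(* An instance of problem MR.  Jobs are 0..njobs-1, processors 0..nprocs-1.
   kind i j = Some k  iff job j has a task T_{i,j} of kind k on processor i. *)
Record instance := mkInstance {
  njobs  : nat;
  nprocs : nat;
  weight : nat -> R;
  release : nat -> R;
  kind   : nat -> nat -> option task_kind;
  work   : nat -> nat -> R;
  budget : R
}.

Definition has_task (I : instance) (i j : nat) : Prop := kind I i j <> None.
Definition is_map (I : instance) (i j : nat) : Prop := kind I i j = Some MapTask.
Definition is_reduce (I : instance) (i j : nat) : Prop := kind I i j = Some ReduceTask.

Definition valid_instance (I : instance) : Prop :=
  (forall j, (j < njobs I)%nat -> 0 < weight I j) /\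
  (forall j, (j < njobs I)%nat -> 0 <= release I j) /\
  (forall i j, (i < nprocs I)%nat -> (j < njobs I)%nat -> has_task I i j -> 0 <= work I i j) /\
  0 < budget I /\
  (forall j, (j < njobs I)%nat ->
     (exists i, (i < nprocs I)%nat /\ is_map I i j) /\
     (exists i, (i < nprocs I)%nat /\ is_reduce I i j)).

Record schedule := mkSchedule { start : nat -> nat -> R; speed : nat -> nat -> R }.

Definition finish (I : instance) (S : schedule) (i j : nat) : R :=
  start S i j + work I i j / speed S i j.

Fixpoint fsum (n : nat) (f : nat -> R) : R :=
  match n with O => 0 | S k => fsum k f + f k end.

Definition energy (I : instance) (beta : R) (S : schedule) : R :=
  fsum (nprocs I) (fun i => fsum (njobs I) (fun j =>
    match kind I i j with
    | Some _ => work I i j * Rpower (speed S i j) (beta - 1)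
    | None => 0
    end)).

(* The max is computed with a
   fold starting at 0; since every job has a task and, in a feasible schedule,
   every completion time is >= r_j >= 0, this equals the true maximum. *)
Fixpoint max_finish_upto (I : instance) (S : schedule) (j k : nat) : R :=
  match k with
  | O => 0
  | S k' => match kind I k' j with
            | Some _ => Rmax (max_finish_upto I S j k') (finish I S k' j)
            | None => max_finish_upto I S j k'
            end
  end.

Definition completion (I : instance) (S : schedule) (j : nat) : R :=
  max_finish_upto I S j (nprocs I).

Definition objective (I : instance) (S : schedule) : R :=
  fsum (njobs I) (fun j => weight I j * completion I S j).

Definition feasible (I : instance) (beta : R) (S : schedule) : Prop :=
  (forall i j, (i < nprocs I)%nat -> (j < njobs I)%nat -> has_task I i j ->
     0 < speed S i j /\ release I j <= start S i j) /\
  (forall i j j', (i < nprocs I)%nat -> (j < njobs I)%nat -> (j' < njobs I)%nat ->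
     j <> j' -> has_task I i j -> has_task I i j' ->
     finish I S i j <= start S i j' \/ finish I S i j' <= start S i j) /\
  (forall i i' j, (i < nprocs I)%nat -> (i' < nprocs I)%nat -> (j < njobs I)%nat ->
     is_map I i j -> is_reduce I i' j -> finish I S i j <= start S i' j) /\
  energy I beta S <= budget I.

(* An order of the jobs, given by the position pos j in {0..n-1} of each job j
   (a bijection of {0..n-1}). *)
Definition is_order (n : nat) (pos : nat -> nat) : Prop :=
  (forall j, (j < n)%nat -> (pos j < n)%nat) /\
  (forall j j', (j < n)%nat -> (j' < n)%nat -> pos j = pos j' -> j = j').

Definition respects_order (I : instance) (pos : nat -> nat) (S : schedule) : Prop :=
  forall i j j', (i < nprocs I)%nat -> (j < njobs I)%nat -> (j' < njobs I)%nat ->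
    has_task I i j -> has_task I i j' -> (pos j < pos j')%nat ->
    finish I S i j <= start S i j'.

Definition is_FCFS_order (I : instance) (pos : nat -> nat) : Prop :=
  is_order (njobs I) pos /\
  forall j j', (j < njobs I)%nat -> (j' < njobs I)%nat ->
    release I j < release I j' -> (pos j < pos j')%nat.

Definition OPT (I : instance) (beta : R) : Rbar :=
  Glb_Rbar (fun x => exists S, feasible I beta S /\ x = objective I S).

Definition OPT_order (I : instance) (beta : R) (pos : nat -> nat) : Rbar :=
  Glb_Rbar (fun x => exists S, feasible I beta S /\ respects_order I pos S /\
                               x = objective I S).

(* Job 0 is released first and carries all the work, a Map task of work 1 equal
   to the whole energy budget, so it cannot run faster than speed 1 and occupies its
   processor for at least one time unit.  The n - 1 other jobs are released at time 1/n
   and have no work at all.  An optimal schedule runs them at time 1/n, ahead of job 0,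
   for a total cost of at most 2; in the FCFS order they must all wait for job 0, and
   each of them completes no earlier than time 1, for a total cost of at least n - 1. *)

From Stdlib Require Import Reals Lra Lia.
From Coquelicot Require Import Coquelicot.
Open Scope R_scope.

Lemma fsum_le n f g : (forall k, (k < n)%nat -> f k <= g k) -> fsum n f <= fsum n g.
Proof.
  induction n as [|n IHn]; intros Hfg; simpl; [lra|].
  assert (fsum n f <= fsum n g) by (apply IHn; intros; apply Hfg; lia).
  assert (f n <= g n) by (apply Hfg; lia).
  lra.
Qed.

Lemma fsum_const n c : fsum n (fun _ => c) = INR n * c.
Proof. induction n as [|n IHn]; simpl fsum; [simpl; ring|]. rewrite IHn, S_INR. ring. Qed.

Lemma fsum_nonneg n f : (forall k, (k < n)%nat -> 0 <= f k) -> 0 <= fsum n f.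
Proof.
  intros Hf. replace 0 with (fsum n (fun _ => 0)) at 1 by (rewrite fsum_const; ring).
  now apply fsum_le.
Qed.

Lemma fsum_Sl n f : fsum (S n) f = f 0%nat + fsum n (fun k => f (S k)).
Proof.
  induction n as [|n IHn]; [simpl; ring|].
  change (fsum (S (S n)) f) with (fsum (S n) f + f (S n)).
  rewrite IHn. simpl. ring.
Qed.

Lemma fsum_ge_term n f k :
  (forall k, (k < n)%nat -> 0 <= f k) -> (k < n)%nat -> f k <= fsum n f.
Proof.
  induction n as [|n IHn]; intros Hf Hk; simpl; [lia|].
  assert (0 <= f n) by (apply Hf; lia).
  destruct (Nat.eq_dec k n) as [->|Hkn].
  - assert (0 <= fsum n f) by (apply fsum_nonneg; intros; apply Hf; lia). lra.
  - assert (f k <= fsum n f) by (apply IHn; [intros; apply Hf|]; lia). lra.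
Qed.

Lemma Glb_Rbar_ge (E : R -> Prop) L :
  (forall x, E x -> L <= x) -> Rbar_le (Finite L) (Glb_Rbar E).
Proof. intros HL. now apply (Glb_Rbar_correct E). Qed.

Lemma Glb_Rbar_finite_between (E : R -> Prop) L x0 :
  E x0 -> (forall x, E x -> L <= x) ->
  exists g, Glb_Rbar E = Finite g /\ L <= g /\ g <= x0.
Proof.
  intros Hx0 HL. destruct (Glb_Rbar_correct E) as [Hlb Hglb].
  specialize (Hglb (Finite L) HL). specialize (Hlb x0 Hx0).
  destruct (Glb_Rbar E); simpl in *; try contradiction. eauto.
Qed.

Lemma Rpower_base_1 y : Rpower 1 y = 1.
Proof. unfold Rpower. rewrite ln_1, Rmult_0_r. apply exp_0. Qed.

Lemma Rpower_gt_1 x y : 1 < x -> 0 < y -> 1 < Rpower x y.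
Proof. intros Hx Hy. rewrite <- (Rpower_O x) by lra. now apply Rpower_lt. Qed.

Section Completion.

Variables (I : instance) (sch : schedule) (j : nat).

Lemma max_finish_upto_nonneg k : 0 <= max_finish_upto I sch j k.
Proof.
  induction k as [|k IHk]; simpl; [lra|].
  destruct (kind I k j); [apply (Rle_trans _ _ _ IHk), Rmax_l | exact IHk].
Qed.

Lemma max_finish_upto_ge i k :
  (i < k)%nat -> has_task I i j -> finish I sch i j <= max_finish_upto I sch j k.
Proof.
  unfold has_task. induction k as [|k IHk]; intros Hik Hi; simpl; [lia|].
  destruct (Nat.eq_dec i k) as [->|Hne].
  - destruct (kind I k j); [apply Rmax_r | congruence].
  - destruct (kind I k j); [eapply Rle_trans; [|apply Rmax_l]|]; apply IHk; auto; lia.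
Qed.

Lemma max_finish_upto_le k b : 0 <= b ->
  (forall i, (i < k)%nat -> has_task I i j -> finish I sch i j <= b) ->
  max_finish_upto I sch j k <= b.
Proof.
  unfold has_task. induction k as [|k IHk]; intros Hb Hfin; simpl; [lra|].
  assert (max_finish_upto I sch j k <= b) by (apply IHk; auto).
  destruct (kind I k j) eqn:Hk; [|assumption].
  apply Rmax_lub; [assumption|]. apply Hfin; [lia | congruence].
Qed.

Lemma completion_nonneg : 0 <= completion I sch j.
Proof. apply max_finish_upto_nonneg. Qed.

Lemma completion_ge_finish i :
  (i < nprocs I)%nat -> has_task I i j -> finish I sch i j <= completion I sch j.
Proof. apply max_finish_upto_ge. Qed.

Lemma completion_le b : 0 <= b ->
  (forall i, (i < nprocs I)%nat -> has_task I i j -> finish I sch i j <= b) ->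
  completion I sch j <= b.
Proof. apply max_finish_upto_le. Qed.

End Completion.

Section Feasible.

Variables (I : instance) (beta : R) (sch : schedule).
Hypothesis HI : valid_instance I.

Lemma objective_ge_term j : (j < njobs I)%nat -> weight I j * completion I sch j <= objective I sch.
Proof.
  destruct HI as [Hw _].
  apply (fsum_ge_term _ (fun j => weight I j * completion I sch j)).
  intros k Hk. apply Rmult_le_pos; [apply Rlt_le, Hw, Hk | apply completion_nonneg].
Qed.

Lemma task_energy_le i j :
  (i < nprocs I)%nat -> (j < njobs I)%nat -> has_task I i j ->
  work I i j * Rpower (speed sch i j) (beta - 1) <= energy I beta sch.
Proof.
  destruct HI as (_ & _ & Hwork & _).
  intros Hi Hj Htask.
  set (term i j := match kind I i j with
                   | Some _ => work I i j * Rpower (speed sch i j) (beta - 1)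
                   | None => 0 end).
  assert (Hterm : forall i j, (i < nprocs I)%nat -> (j < njobs I)%nat -> 0 <= term i j).
  { intros i' j' Hi' Hj'. unfold term. destruct (kind I i' j') eqn:Hk; [|lra].
    apply Rmult_le_pos; [|apply Rlt_le, exp_pos].
    apply Hwork; auto. unfold has_task. congruence. }
  assert (Hij : term i j = work I i j * Rpower (speed sch i j) (beta - 1)).
  { unfold term. unfold has_task in Htask. now destruct (kind I i j). }
  rewrite <- Hij. unfold energy. fold term.
  apply (Rle_trans _ (fsum (njobs I) (term i))).
  - apply fsum_ge_term; auto.
  - apply (fsum_ge_term _ (fun i => fsum (njobs I) (term i))); auto.
    intros i' Hi'. apply fsum_nonneg. auto.
Qed.

Hypothesis HS : feasible I beta sch.

Lemma start_le_finish i j :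
  (i < nprocs I)%nat -> (j < njobs I)%nat -> has_task I i j -> start sch i j <= finish I sch i j.
Proof.
  destruct HI as (_ & _ & Hwork & _). destruct HS as [Hsp _].
  intros Hi Hj Htask. destruct (Hsp i j Hi Hj Htask) as [Hs _].
  assert (0 <= work I i j / speed sch i j) by (apply Rle_mult_inv_pos; auto).
  unfold finish. lra.
Qed.

Lemma completion_ge_release j : (j < njobs I)%nat -> release I j <= completion I sch j.
Proof.
  destruct HI as (_ & _ & _ & _ & Htasks). destruct HS as [Hsp _].
  intros Hj. destruct (Htasks j Hj) as [[i [Hi Hmap]] _].
  assert (Htask : has_task I i j) by (unfold has_task, is_map in *; congruence).
  destruct (Hsp i j Hi Hj Htask) as [_ Hr].
  pose proof (start_le_finish i j Hi Hj Htask).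
  pose proof (completion_ge_finish I sch j i Hi Htask).
  lra.
Qed.

Lemma speed_le_1 i j : 1 < beta ->
  (i < nprocs I)%nat -> (j < njobs I)%nat -> has_task I i j ->
  budget I <= work I i j -> speed sch i j <= 1.
Proof.
  intros Hbeta Hi Hj Htask Hbw.
  destruct (Rle_lt_dec (speed sch i j) 1) as [|Hfast]; [assumption|exfalso].
  destruct HI as (_ & _ & _ & Hbudget & _). destruct HS as (_ & _ & _ & Henergy).
  pose proof (task_energy_le i j Hi Hj Htask).
  pose proof (Rpower_gt_1 (speed sch i j) (beta - 1) Hfast ltac:(lra)).
  nra.
Qed.

End Feasible.

Definition front_loaded_instance (n : nat) : instance :=
  mkInstance n 2 (fun _ => 1)
    (fun j => match j with O => 0 | S _ => / INR n end)
    (fun i _ => match i with O => Some MapTask | S O => Some ReduceTask | _ => None end)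
    (fun i j => match i, j with O, O => 1 | _, _ => 0 end)
    1.

Definition deferring_schedule (n : nat) : schedule :=
  mkSchedule (fun i j => match i, j with S O, O => / INR n + 1 | _, _ => / INR n end)
             (fun _ _ => 1).

Section FrontLoaded.

Variable n : nat.
Hypothesis Hn : (2 <= n)%nat.

Let I := front_loaded_instance n.

Lemma inv_n_pos : 0 < / INR n.
Proof. apply Rinv_0_lt_compat, lt_0_INR. lia. Qed.

Lemma front_loaded_valid : valid_instance I.
Proof.
  pose proof inv_n_pos.
  repeat split; simpl; intros; try lra.
  - destruct j; lra.
  - destruct i as [|[|]], j; lra.
  - exists 0%nat. split; [lia|reflexivity].
  - exists 1%nat. split; [lia|reflexivity].
Qed.

Lemma deferring_schedule_feasible beta : feasible I beta (deferring_schedule n).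
Proof.
  pose proof inv_n_pos.
  unfold feasible, finish, is_map, is_reduce, Rdiv; simpl.
  repeat split; intros.
  - lra.
  - destruct i as [|[|]], j; lra.
  - destruct i as [|[|]]; [| |lia]; destruct j, j'; rewrite ?Rinv_1;
      first [congruence | left; lra | right; lra].
  - destruct i as [|[|]], i' as [|[|]]; simpl in *; try discriminate; try lia.
    destruct j; rewrite Rinv_1; lra.
  - unfold energy. destruct n as [|m]; [lia|].
    change (fsum (nprocs I) ?F) with (0 + F 0%nat + F 1%nat). cbv beta.
    change (njobs I) with (S m). rewrite !fsum_Sl. simpl.
    rewrite !fsum_const, Rpower_base_1. lra.
Qed.

Lemma deferring_schedule_objective_le : objective I (deferring_schedule n) <= 2.
Proof.
  pose proof inv_n_pos.
  assert (Hn1 : INR n * / INR n = 1) by (apply Rinv_r, not_0_INR; lia).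
  set (m := (n - 1)%nat).
  assert (HINR : INR n = INR m + 1) by (rewrite <- S_INR; f_equal; lia).
  unfold objective. replace (njobs I) with (S m) by (simpl; lia). rewrite fsum_Sl.
  assert (Hjob0 : 1 * completion I (deferring_schedule n) 0 <= / INR n + 1).
  { rewrite Rmult_1_l. apply completion_le; [lra|].
    intros [|[|]] Hi _; unfold finish; simpl; lra. }
  assert (Hjobs : fsum m (fun k => 1 * completion I (deferring_schedule n) (S k)) <= INR m * / INR n).
  { rewrite <- fsum_const. apply fsum_le. intros k _.
    rewrite Rmult_1_l. apply completion_le; [lra|].
    intros [|[|]] Hi _; unfold finish; simpl; lra. }
  replace (INR m) with (INR n - 1) in Hjobs by lra.
  rewrite Rmult_minus_distr_r, Hn1, Rmult_1_l in Hjobs.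
  simpl weight. lra.
Qed.

Lemma front_loaded_objective_ge beta sch : feasible I beta sch -> / INR n <= objective I sch.
Proof.
  intros HS.
  pose proof (objective_ge_term I sch front_loaded_valid 1 ltac:(simpl; lia)).
  pose proof (completion_ge_release I beta sch front_loaded_valid HS 1 ltac:(simpl; lia)).
  simpl in *. lra.
Qed.

Lemma fcfs_objective_ge beta sch pos : 1 < beta ->
  feasible I beta sch -> respects_order I pos sch -> is_FCFS_order I pos ->
  INR n - 1 <= objective I sch.
Proof.
  intros Hbeta HS Horder [_ Hfcfs].
  pose proof inv_n_pos. pose proof front_loaded_valid as HI.
  assert (Htask0 : forall j, has_task I 0 j) by (intros j; unfold has_task; discriminate).
  assert (Hlong : 1 <= finish I sch 0 0).
  { destruct (proj1 HS 0%nat 0%nat ltac:(simpl; lia) ltac:(simpl; lia) (Htask0 0%nat)) as [Hs Hr].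
    pose proof (speed_le_1 I beta sch HI HS 0 0 Hbeta ltac:(simpl; lia) ltac:(simpl; lia)
      (Htask0 0%nat) ltac:(simpl; lra)).
    assert (1 <= 1 / speed sch 0 0) by (apply (Rmult_le_reg_l (speed sch 0 0)); [|field_simplify]; lra).
    unfold finish. simpl in *. lra. }
  assert (Hwait : forall k, (S k < n)%nat -> 1 <= completion I sch (S k)).
  { intros k Hk.
    assert (pos 0 < pos (S k))%nat by (apply Hfcfs; simpl; try lia; lra).
    pose proof (Horder 0%nat 0%nat (S k) ltac:(simpl; lia) ltac:(simpl; lia) Hk
      (Htask0 0%nat) (Htask0 (S k)) ltac:(assumption)).
    pose proof (start_le_finish I beta sch HI HS 0 (S k) ltac:(simpl; lia) Hk (Htask0 (S k))).
    pose proof (completion_ge_finish I sch (S k) 0 ltac:(simpl; lia) (Htask0 (S k))).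
    lra. }
  set (m := (n - 1)%nat).
  assert (HINR : INR n = INR m + 1) by (rewrite <- S_INR; f_equal; lia).
  unfold objective. replace (njobs I) with (S m) by (simpl; lia). rewrite fsum_Sl, HINR.
  pose proof (completion_nonneg I sch 0).
  assert (INR m * 1 <= fsum m (fun k => 1 * completion I sch (S k))).
  { rewrite <- fsum_const. apply fsum_le. intros k Hk. rewrite Rmult_1_l.
    apply Hwait. unfold m in Hk. lia. }
  simpl weight. lra.
Qed.

End FrontLoaded.

Theorem proposition3 :
  forall beta : R, 1 < beta ->
  exists c : R, 0 < c /\
  exists N : nat, forall n : nat, (N <= n)%nat ->
    exists I : instance,
      valid_instance I /\ njobs I = n /\
      exists opt : R, OPT I beta = Finite opt /\ 0 < opt /\
      forall pos : nat -> nat, is_FCFS_order I pos ->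
        Rbar_le (Finite (c * INR n * opt)) (OPT_order I beta pos).
Proof.
  intros beta Hbeta. exists (1 / 4). split; [lra|]. exists 2%nat. intros n Hn.
  exists (front_loaded_instance n).
  split; [exact (front_loaded_valid n Hn)|]. split; [reflexivity|].
  assert (H2n : 2 <= INR n) by (apply (le_INR 2 n) in Hn; simpl in Hn; lra).
  pose proof (inv_n_pos n Hn).
  destruct (Glb_Rbar_finite_between
    (fun x => exists sch, feasible (front_loaded_instance n) beta sch /\
                          x = objective (front_loaded_instance n) sch)
    (/ INR n) (objective (front_loaded_instance n) (deferring_schedule n)))
    as [opt [Hopt [Hopt_lo Hopt_hi]]].
  - exists (deferring_schedule n). split; [apply deferring_schedule_feasible|]; auto.
  - intros x [sch [HS ->]]. exact (front_loaded_objective_ge n Hn beta sch HS).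
  - exists opt. split; [exact Hopt|]. split; [lra|].
    pose proof (deferring_schedule_objective_le n Hn).
    intros pos Hpos. apply Glb_Rbar_ge. intros x [sch [HS [Horder ->]]].
    pose proof (fcfs_objective_ge n Hn beta sch pos Hbeta HS Horder Hpos).
    assert (1 / 4 * INR n * opt <= 1 / 4 * INR n * 2) by (apply Rmult_le_compat_l; lra).
    lra.
Qed.
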